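(* Let $k,n\in\mathbb{N}$ with $2n\ge k$. For $i\in\mathbb{N}$ put $x_i=\frac{1+(-1)^{i}}{2}\cdot\frac{[(i-1)!!]^2}{i+1}$ (so $(x_1,x_2,x_3,x_4,x_5,x_6,\dots)=(0,\tfrac13,0,\tfrac95,0,\tfrac{225}{7},\dots)$). Then \[ \mathrm{B}_{2n,k}\bigl(x_1,x_2,\dots,x_{2n-k+1}\bigr)=(-1)^{n+k}\frac{(4n)!!}{(2n+k)!}\sum_{q=1}^{k}(-1)^{q}\binom{2n+k}{k-q}\,Q(q,2n;2). \]
   Context: Partial Bell polynomials: for $n\ge k\ge0$, \[ \mathrm{B}_{n,k}(x_1,\dots,x_{n-k+1})=\sum\frac{n!}{\prod_{i=1}^{n-k+1}\ell_i!}\prod_{i=1}^{n-k+1}\left(\frac{x_i}{i!}\right)^{\ell_i}, \] the sum over all $(\ell_1,\dots,\ell_{n-k+1})\in\mathbb{N}_0^{n-k+1}$ with $\sum_i i\ell_i=n$ and $\sum_i\ell_i=k$. Double factorials: $(2p)!!=2^p p!$, $(2p-1)!!=1\cdot3\cdots(2p-1)$, $0!!=(-1)!!=1$. $s(n,k)$ denotes the signed Stirling numbers of the first kind, defined by $\frac{[\ln(1+x)]^k}{k!}=\sum_{n=k}^\infty s(n,k)\frac{x^n}{n!}$ for $|x|<1$; equivalently $\prod_{j=0}^{n-1}(z-j)=\sum_{k=0}^n s(n,k)z^k$. For $m\in\mathbb{N}$, $k\in\mathbb{N}_0$ and $\alpha\in\mathbb{R}$ define \[ Q(m,k;\alpha)=\sum_{\ell=0}^{k}\binom{m+\ell-1}{m-1}\,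 s(m+k-1,m+\ell-1)\left(\frac{m+k-\alpha}{2}\right)^{\ell}, \] with the convention $0^0=1$. *)

From mathcomp Require Import all_boot all_order all_algebra.
Set Implicit Arguments. Unset Strict Implicit. Unset Printing Implicit Defensive.
Import Order.TTheory GRing.Theory Num.Theory.
Local Open Scope ring_scope.

Fixpoint dfact (n : nat) : nat :=
  match n with
  | 0 => 1
  | 1 => 1
  | (m.+1 as p).+1 => (p.+1 * dfact m)%N
  end.

(* The sum ranges over (l_1,...,l_{n-k+1}) in N_0 with sum i l_i = n and
   sum l_i = k; the bound l_i <= n is automatic from sum i l_i = n.
   Index j : 'I_(n-k+1) represents i = j+1. *)
Definition bellB (n k : nat) (x : nat -> rat) : rat :=
  \sum_(l : {ffun 'I_(n - k + 1) -> 'I_n.+1} |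
          ((\sum_(j : 'I_(n - k + 1)) (j.+1 * l j) == n)%N && (\sum_(j : 'I_(n - k + 1)) (l j : nat) == k)%N))
    ((n`!)%:R / (\prod_(j : 'I_(n - k + 1)) (l j)`!)%:R
      * \prod_(j : 'I_(n - k + 1)) (x j.+1 / ((j.+1)`!)%:R) ^+ l j).

Definition stirling1 (n k : nat) : rat :=
  (\prod_(j < n) ('X - (j%:R)%:P) : {poly rat})`_k.

(* Q(m,k;alpha), for m >= 1 (uses 0^0 = 1, which holds for ^+ ). *)
Definition Qfun (m k : nat) (alpha : rat) : rat :=
  \sum_(l < k.+1)
    ('C(m + l - 1, m - 1))%:R * stirling1 (m + k - 1) (m + l - 1)
      * (((m + k)%:R - alpha) / 2%:R) ^+ l.

From mathcomp Require Import all_boot all_order all_algebra.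
From mathcomp Require Import ring zify.
Set Implicit Arguments. Unset Strict Implicit. Unset Printing Implicit Defensive.
Import Order.TTheory GRing.Theory Num.Theory.
Local Open Scope ring_scope.

(* With a_i = x_i / i!, the series t * sum_i a_i t^i is arcsin t, so by the
   exponential formula B_(2n,k)(x) = (2n)!/k! [t^(2n)] (arcsin(t)/t - 1)^k, and
   the binomial theorem reduces the statement to the coefficients
   [t^(2n+q)] arcsin(t)^q for q = 1..k.  For y = arcsin' one has
   (1 - t^2) y' = t y and (1 - t^2) y^2 = 1, hence
   ((1 - t^2) d^2 - t d) arcsin^q = q (q - 1) arcsin^(q-2), a two-step
   recurrence on coefficients.  The same recurrence is satisfied by
   q!/(2n+q)! (-4)^n [z^(q-1)] T_(2n+q), where T_N is the falling factorial of
   length N - 1 recentred at (N - 2)/2, and Q(q, 2n; 2) = [z^(q-1)] T_(q+2n);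
   the theorem follows after normalising the constants.

   Power series are handled as polynomials truncated at a large degree D and
   compared through [agree_below]. *)

Section AgreeBelow.
Variable R : nzRingType.

Definition agree_below (m : nat) (p q : {poly R}) :=
  forall i, (i < m)%N -> p`_i = q`_i.

Lemma agree_belowM m p p' q q' :
  agree_below m p p' -> agree_below m q q' -> agree_below m (p * q) (p' * q').
Proof.
move=> hp hq i lti; rewrite !coefM; apply: eq_bigr => j _.
have hj : (j <= i)%N by rewrite -ltnS.
by rewrite hp ?hq //; lia.
Qed.

Lemma agree_belowX m p q k : agree_below m p q -> agree_below m (p ^+ k) (q ^+ k).
Proof.
move=> h; elim: k => [|k IH]; first by move=> i _.
by rewrite !exprS; apply: agree_belowM.
Qed.

Lemma agree_below_mull0 m r u : agree_below m u 0 -> agree_below m (r * u) 0.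
Proof.
by move=> h; rewrite -(mulr0 r); apply: agree_belowM => // i.
Qed.

Lemma agree_below_subr m p q : agree_below m p q -> agree_below m (p - q) 0.
Proof. by move=> h i hi; rewrite coefB h // subrr coef0. Qed.

End AgreeBelow.

Section TaylorShift.
Variable R : comNzRingType.

Lemma coef_XaddC_exp (c : R) i m :
  (('X + c%:P) ^+ i)`_m = ('C(i, m))%:R * c ^+ (i - m).
Proof.
rewrite addrC exprDn
  (eq_bigr (fun k : 'I_i.+1 => ('C(i, k)%:R * c ^+ (i - k)) *: 'X^k)); last first.
  by move=> k _; rewrite -(rmorphXn polyC) mul_polyC scalerMnl mulr_natl.
rewrite -(poly_def _ (fun j => 'C(i, j)%:R * c ^+ (i - j))) coef_poly ltnS.
by case: leqP => // him; rewrite bin_small // mul0r.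
Qed.

Lemma coef_comp_XaddC (p : {poly R}) c m :
  (p \Po ('X + c%:P))`_m = \sum_(i < size p) p`_i * ('C(i, m))%:R * c ^+ (i - m).
Proof.
rewrite comp_polyE coef_sum; apply: eq_bigr => i _.
by rewrite coefZ coef_XaddC_exp mulrA.
Qed.

End TaylorShift.

Definition bell_x (i : nat) : rat :=
  (1 + (-1) ^+ i) / 2%:R * ((dfact i.-1) ^ 2)%:R / (i.+1)%:R.

(* a_i = x_i / i!, so that arcsin t = sum_i a_i t^(i+1):
   a_(2m) = (2m-1)!! / ((2m)!! (2m+1)) and a_(2m+1) = 0. *)
Definition asin_coef (i : nat) : rat := bell_x i / (i`!)%:R.

Lemma dfact_pred m : dfact m.+1 = (m.+1 * dfact m.-1)%N.
Proof. by case: m => [|m] //=; rewrite muln1. Qed.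

Lemma asin_coef0 : asin_coef 0 = 1.
Proof. by rewrite /asin_coef /bell_x /= expr0 exp1n fact0; field. Qed.

Lemma asin_coef1 : asin_coef 1 = 0.
Proof. by rewrite /asin_coef /bell_x expr1 subrr !mul0r. Qed.

Lemma asin_coef_rec m :
  (m.+2 * m.+3)%:R * asin_coef m.+2 = (m.+1 ^ 2)%:R * asin_coef m.
Proof.
rewrite /asin_coef /bell_x [m.+2.-1]/= dfact_pred !exprS !mulN1r opprK.
rewrite !factS !natrX !natrM.
have h4 : m`!%:R != 0 :> rat by rewrite pnatr_eq0 -lt0n fact_gt0.
move: h4; set f := m`!%:R => h4.
have h1 : m.+1%:R != 0 :> rat by rewrite pnatr_eq0.
have h2 : m.+2%:R != 0 :> rat by rewrite pnatr_eq0.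
have h3 : m.+3%:R != 0 :> rat by rewrite pnatr_eq0.
move: h1 h2 h3; set a1 := m.+1%:R; set a2 := m.+2%:R; set a3 := m.+3%:R.
move=> h1 h2 h3; clearbody a1 a2 a3 f.
by field; rewrite h1 h2 h3 h4.
Qed.

Section TruncatedArcsine.
Variable D : nat.

Definition asin_quot : {poly rat} := \poly_(i < D) asin_coef i.
(* arcsin(t), truncated below degree D + 1, and its derivative y. *)
Definition asin_poly : {poly rat} := 'X * asin_quot.
Definition asin_deriv : {poly rat} := asin_poly^`().

Lemma coef_asin_deriv i :
  asin_deriv`_i = if (i < D)%N then asin_coef i * i.+1%:R else 0.
Proof.
rewrite /asin_deriv /asin_poly coef_deriv coefXM /= coef_poly.
by case: ifP => _; rewrite ?mul0rn // mulr_natr.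
Qed.

(* y = 1/sqrt(1-t^2) solves (1-t^2) y' = t y. *)
Lemma asin_deriv_ode :
  agree_below D.-1 (asin_deriv^`() - 'X^2 * asin_deriv^`()) ('X * asin_deriv).
Proof.
move=> i hi; rewrite coefB coefXnM coefXM !(coef_deriv asin_deriv) !coef_asin_deriv.
have hD : (i.+1 < D)%N by lia.
case: i hi hD => [|[|m]] hi hD /=.
- by rewrite hD asin_coef1 mul0r mul0rn subr0.
- rewrite !ifT; [|lia|lia].
  have h := asin_coef_rec 0; rewrite asin_coef0 mulr1 exp1n mulr1n in h.
  rewrite asin_coef0 mulr1 subr0; apply: etrans _ h.
  by rewrite -mulr_natr natrM; ring.
- have hm : (m.+1 < D)%N by apply: ltn_trans hD; rewrite ltnS ltnW.
  rewrite !subSS !subn0 hD hm.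
  rewrite -(mulr_natr (asin_coef m.+3 * _)) -(mulr_natr (asin_coef m.+1 * _)).
  have -> : asin_coef m.+3 * m.+4%:R * m.+3%:R = (m.+3 * m.+4)%:R * asin_coef m.+3.
    by rewrite natrM; ring.
  by rewrite asin_coef_rec natrX; ring.
Qed.

Definition asin_norm : {poly rat} :=
  asin_deriv * asin_deriv - 'X^2 * (asin_deriv * asin_deriv).

Lemma deriv_asin_norm : asin_norm^`() =
  (2%:R * asin_deriv) *
    ((asin_deriv^`() - 'X^2 * asin_deriv^`()) - 'X * asin_deriv).
Proof.
rewrite /asin_norm derivB (derivM (GRing.exp _ _)) derivXn.
rewrite !(derivM asin_deriv) /= expr1 -(mulr_natr 'X); ring.
Qed.

(* (1 - t^2) y^2 = 1: its derivative vanishes by the ODE, its constant term is 1. *)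
Lemma asin_norm1 : agree_below D asin_norm 1.
Proof.
have h0 : agree_below D.-1 asin_norm^`() 0.
  by rewrite deriv_asin_norm; apply/agree_below_mull0/agree_below_subr/asin_deriv_ode.
move=> [|j] hj.
  rewrite /asin_norm coefB coefXnM /= subr0 coef0M coef_asin_deriv hj.
  by rewrite asin_coef0 mul1r coefC.
have := h0 j; rewrite coef_deriv coef0 coefC /= => h.
have : asin_norm`_j.+1 *+ j.+1 == 0 by rewrite h //; lia.
by rewrite mulrn_eq0 => /orP [//|/eqP].
Qed.

Lemma asin_pow_ode_expand j :
  let A := asin_poly in let G1 := (A ^+ j)^`() in let G2 := G1^`() in
  G2 - 'X^2 * G2 - 'X * G1 =
  (asin_deriv^`() - 'X^2 * asin_deriv^`() - 'X * asin_deriv) * A ^+ j.-1 *+ j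
  + asin_norm * A ^+ j.-1.-1 *+ (j * j.-1).
Proof.
move=> A G1 G2; rewrite /G2 /G1 deriv_exp derivMn derivM deriv_exp /asin_norm.
by rewrite -/asin_deriv mulrnA; ring.
Qed.

Lemma asin_pow_ode j : agree_below D.-1
  (((asin_poly ^+ j)^`())^`() - 'X^2 * ((asin_poly ^+ j)^`())^`()
     - 'X * (asin_poly ^+ j)^`())
  (asin_poly ^+ j.-1.-1 *+ (j * j.-1)).
Proof.
rewrite asin_pow_ode_expand; set A := asin_poly.
have e1 : agree_below D.-1 ((asin_deriv^`() - 'X^2 * asin_deriv^`()
    - 'X * asin_deriv) * A ^+ j.-1 *+ j) 0.
  rewrite -mulr_natl mulrA mulrC.
  by apply/agree_below_mull0/agree_below_mull0/agree_below_subr/asin_deriv_ode.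
have e2 : agree_below D.-1 (asin_norm * A ^+ j.-1.-1 *+ (j * j.-1))
    (A ^+ j.-1.-1 *+ (j * j.-1)).
  rewrite -(mulr_natl (asin_norm * _)) -(mulr_natl (A ^+ _)) mulrA.
  apply: agree_belowM => // i hi.
  by rewrite mulr_natl !coefMn asin_norm1 //; lia.
by move=> i hi; rewrite coefD e1 // e2 // coef0 add0r.
Qed.

Lemma coef_asin_pow_rec j N : (N.+1 < D)%N ->
  (N.+1 * N.+2)%:R * (asin_poly ^+ j)`_N.+2 =
  (N ^ 2)%:R * (asin_poly ^+ j)`_N + (j * j.-1)%:R * (asin_poly ^+ j.-2)`_N.
Proof.
move=> hN; have := @asin_pow_ode j N ltac:(lia).
rewrite !coefB coefXnM coefXM !coef_deriv coefMn [(j * j.-1)%:R * _]mulr_natl.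
by case: N hN => [|[|m]] hN /= h; rewrite -h ?subSS ?subn0; ring.
Qed.

(* A^q starts with t^q, since a_0 = 1. *)
Lemma coef_asin_pow_diag q : (0 < D)%N -> (asin_poly ^+ q)`_q = 1.
Proof.
move=> hD; rewrite /asin_poly exprMn coefXnM ltnn subnn.
elim: q => [|q IH]; first by rewrite expr0 coefC.
by rewrite exprS coef0M IH mulr1 coef_poly hD asin_coef0.
Qed.

End TruncatedArcsine.

Definition falling (N : nat) : {poly rat} := \prod_(j < N) ('X - (j%:R)%:P).

Lemma size_falling N : size (falling N) = N.+1.
Proof.
rewrite /falling -(big_mkord xpredT (fun j => 'X - (j%:R)%:P)).
by rewrite size_prod_XsubC /index_iota size_iota subn0.
Qed.

(* The central shift c_N = (N - 2) / 2 and the polynomial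
   T_N(z) = falling_(N-1)(z + c_N), whose roots are symmetric around 0. *)
Definition central_shift (N : nat) : rat := (N%:R - 2%:R) / 2%:R.
Definition central (N : nat) : {poly rat} :=
  falling N.-1 \Po ('X + (central_shift N)%:P).

Lemma Qfun_central q n :
  (1 <= q)%N -> Qfun q (2 * n) 2%:R = (central (q + 2 * n))`_q.-1.
Proof.
case: q => [//|q] _; rewrite /central coef_comp_XaddC size_falling /Qfun.
have -> : (q.+1 + 2 * n).-1.+1 = (q + (2 * n).+1)%N by lia.
rewrite big_split_ord /= [X in _ = X + _]big1 ?add0r; last first.
  by move=> i _; rewrite bin_small ?mulr0 ?mul0r.
apply: eq_bigr => l _.
have -> : (q.+1 + l - 1 = q + l)%N by lia.
have -> : (q.+1 - 1 = q)%N by lia.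
have -> : (q.+1 + 2 * n - 1 = q + 2 * n)%N by lia.
have -> : (q + l - q = l)%N by lia.
by rewrite /stirling1 /central_shift /falling; ring.
Qed.

Lemma central_prod N :
  central N = \prod_(j < N.-1) ('X - (j%:R - central_shift N)%:P).
Proof.
rewrite /central /falling rmorph_prod; apply: eq_bigr => j _ /=.
by rewrite comp_polyB comp_polyX comp_polyC polyCB; ring.
Qed.

Lemma central_lead q : (1 <= q)%N -> (central q)`_q.-1 = 1.
Proof.
move=> hq; rewrite central_prod.
have hs : size (\prod_(j < q.-1) ('X - (j%:R - central_shift q)%:P)) = q.
  rewrite -(big_mkord xpredT (fun j => ('X - (j%:R - central_shift q)%:P))).
  by rewrite size_prod_XsubC /index_iota size_iota subn0; lia.
have := lead_coef_prod_XsubC (index_enum 'I_q.-1) xpredT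
  (fun j : 'I_q.-1 => j%:R - central_shift q).
by rewrite lead_coefE hs.
Qed.

(* Passing from N to N + 2 adds the pair of roots +-(N/2):
   T_(N+2) = (z^2 - N^2/4) T_N. *)
Lemma central_rec M :
  central M.+3 = ('X^2 - ((M.+1%:R) ^+ 2 / 4%:R)%:P) * central M.+1.
Proof.
rewrite !central_prod /= big_ord_recl big_ord_recr /=.
have -> : \prod_(i < M) ('X - ((bump 0 (widen_ord (leqnSn M) i))%:R
                                 - central_shift M.+3)%:P)
        = \prod_(i < M) ('X - (i%:R - central_shift M.+1)%:P).
  apply: eq_bigr => i _; congr (_ - _%:P).
  by rewrite /bump /= add1n /central_shift -(addn1 i) natrD -!(addn3 M)
     -(addn1 M) !natrD; field.
have hb : (bump 0 M)%:R - central_shift M.+3 = central_shift M.+3.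
  by rewrite /bump /= add1n /central_shift -(addn3 M) -(addn1 M) !natrD; field.
have hc : (M.+1%:R ^+ 2 / 4%:R : rat) = central_shift M.+3 ^+ 2.
  by rewrite /central_shift -(addn3 M) -(addn1 M) !natrD; field.
by rewrite hb hc (rmorphXn polyC) sub0r polyCN opprK; ring.
Qed.

Lemma coef_central_rec M i : (central M.+3)`_i =
  (if (i < 2)%N then 0 else (central M.+1)`_(i - 2))
  - (M.+1%:R) ^+ 2 / 4%:R * (central M.+1)`_i.
Proof. by rewrite central_rec mulrBl coefB coefXnM coefCM. Qed.

(* The claimed closed form of [t^(2n+q)] arcsin(t)^q. *)
Definition asin_pow_closed (q n : nat) : rat :=
  (q`!)%:R / ((2 * n + q)`!)%:R * (-4) ^+ n * (central (2 * n + q))`_q.-1.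

Lemma asin_pow_closed_rec q n : (1 <= q)%N ->
  let N := (2 * n + q)%N in
  (N.+1 * N.+2)%:R * asin_pow_closed q n.+1 =
  (N ^ 2)%:R * asin_pow_closed q n
  + (q * q.-1)%:R * (if (3 <= q)%N then asin_pow_closed q.-2 n.+1 else 0).
Proof.
move=> hq N; rewrite /asin_pow_closed.
have -> : (2 * n.+1 + q = N.+2)%N by rewrite /N; lia.
have [M eM] : exists M, N = M.+1 by exists N.-1; rewrite /N; lia.
rewrite -/N eM coef_central_rec.
have -> : (q * q.-1)%:R * (if (3 <= q)%N then (q.-2)`!%:R
      / (2 * n.+1 + q.-2)`!%:R * (-4) ^+ n.+1
      * (central (2 * n.+1 + q.-2))`_q.-2.-1 else 0)
    = q`!%:R / M.+1`!%:R * (-4) ^+ n.+1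
      * (if (q.-1 < 2)%N then 0 else (central M.+1)`_(q.-1 - 2)).
  case: (ltnP q.-1 2) => hq2; first by rewrite ifF ?mulr0 //; lia.
  rewrite ifT; last by lia.
  have -> : (2 * n.+1 + q.-2 = M.+1)%N by move: eM; rewrite /N; lia.
  have -> : (q.-2.-1 = q.-1 - 2)%N by lia.
  have -> : (q`! = q * q.-1 * (q.-2)`!)%N.
    by move: hq2; clear; case: q => [|[|q]] // _; rewrite !factS mulnA.
  by rewrite natrM; ring.
set t1 := (central M.+1)`_q.-1.
set t2 := (if (q.-1 < 2)%N then 0 else _).
rewrite !factS !natrM exprS.
have hf : (M`!%:R : rat) != 0 by rewrite pnatr_eq0 -lt0n fact_gt0.
move: hf; set f := M`!%:R => hf.
set m1 := M.+1%:R. set m2 := M.+2%:R. set m3 := M.+3%:R.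
have h1 : m1 != 0 by rewrite pnatr_eq0.
have h2 : m2 != 0 by rewrite pnatr_eq0.
have h3 : m3 != 0 by rewrite pnatr_eq0.
clearbody f m1 m2 m3 t1 t2.
by field; rewrite h1 h2 h3 hf.
Qed.

(* [t^(2n+q)] arcsin(t)^q = q!/(2n+q)! (-4)^n [z^(q-1)] T_(2n+q): both sides
   satisfy the same two-step recurrence in n and agree for n = 0. *)
Lemma coef_asin_pow D q n : (1 <= q)%N -> (2 * n + q < D)%N ->
  (asin_poly D ^+ q)`_(2 * n + q) = asin_pow_closed q n.
Proof.
elim/ltn_ind: q n => q IHq n; elim: n => [|n IHn] hq hD.
  rewrite /asin_pow_closed muln0 add0n coef_asin_pow_diag ?central_lead //; last by lia.
  by rewrite expr0 !mulr1 divff // pnatr_eq0 -lt0n fact_gt0.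
have hnz : (((2 * n + q).+1 * (2 * n + q).+2)%:R : rat) != 0 by rewrite pnatr_eq0.
apply: (mulfI hnz); rewrite (asin_pow_closed_rec n hq).
have -> : (2 * n.+1 + q = (2 * n + q).+2)%N by lia.
rewrite coef_asin_pow_rec; last by lia.
rewrite (IHn hq); last by lia.
congr (_ + _ * _); case: (ltnP q 3) => hq3.
  rewrite (_ : q.-2 = 0%N); last by lia.
  by rewrite expr0 coefC ifF //; apply/negbTE; lia.
have -> : (2 * n + q = 2 * n.+1 + q.-2)%N by lia.
by rewrite IHq //; lia.
Qed.

Lemma prod_polyC_mulXn (R : comNzRingType) (I : finType) (a : I -> R) (e : I -> nat) :
  \prod_(j : I) ((a j)%:P * 'X^(e j)) = (\prod_j a j)%:P * 'X^(\sum_j e j).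
Proof. by rewrite big_split /= -rmorph_prod prodrXr. Qed.

Definition exp_trunc (N : nat) (z : {poly rat}) : {poly {poly rat}} :=
  \sum_(m < N) (((m`!)%:R^-1 : rat) *: z ^+ m)%:P * 'X^m.

Lemma coef_exp_trunc N z m :
  (m < N)%N -> (exp_trunc N z)`_m = ((m`!)%:R^-1 : rat) *: z ^+ m.
Proof.
move=> hm; rewrite /exp_trunc (eq_bigr _ (fun m _ => mul_polyC _ _)).
by rewrite -(poly_def _ (fun m => ((m`!)%:R^-1 : rat) *: z ^+ m)) coef_poly hm.
Qed.

Lemma coef_prod_exp_trunc (I : Type) (r : seq I) (z : I -> {poly rat}) N i :
  (i < N)%N ->
  (\prod_(j <- r) exp_trunc N (z j))`_i
    = ((i`!)%:R^-1 : rat) *: (\sum_(j <- r) z j) ^+ i.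
Proof.
elim: r i => [|a r IH] i hi.
  rewrite !big_nil coef1; case: i hi => [|i] hi.
    by rewrite expr0 /= invr1 scale1r.
  by rewrite expr0n /= scaler0.
rewrite !big_cons coefM addrC exprDn scaler_sumr; apply: eq_bigr => m _.
have hm : (m <= i)%N by rewrite -ltnS.
rewrite coef_exp_trunc ?IH; [|lia|lia].
rewrite -scalerAl -scalerAr scalerA -scaler_nat scalerA.
congr (_ *: _); last by rewrite mulrC.
have := bin_fact hm; move/(congr1 (fun x => (x%:R : rat))); rewrite !natrM => hb.
have f1 : (m`!%:R : rat) != 0 by rewrite pnatr_eq0 -lt0n fact_gt0.
have f2 : ((i - m)`!%:R : rat) != 0 by rewrite pnatr_eq0 -lt0n fact_gt0.
rewrite -hb; field.
by rewrite f1 f2 pnatr_eq0 -lt0n bin_gt0 hm.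
Qed.

(* Proof: expand prod_j exp(u c_j t^(j+1))
   as a sum over functions l, and read off the coefficient of u^k t^n. *)
Lemma bell_multinomial (c : nat -> rat) M N n k : (k < N)%N ->
  \sum_(l : {ffun 'I_M -> 'I_N} | (\sum_(j : 'I_M) (j.+1 * l j) == n)%N
                               && (\sum_(j : 'I_M) (l j : nat) == k)%N)
    ((\prod_(j : 'I_M) ((l j)`!)%:R)^-1 * \prod_(j : 'I_M) (c j) ^+ l j)
  = (('X * \poly_(i < M) c i) ^+ k)`_n / (k`!)%:R.
Proof.
move=> hk; set z := fun j : 'I_M => c j *: 'X^(j.+1).
have hF : 'X * \poly_(i < M) c i = \sum_(j : 'I_M) z j.
  rewrite poly_def mulr_sumr; apply: eq_bigr => j _.
  by rewrite /z -scalerAr -exprS.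
have := coef_prod_exp_trunc (index_enum 'I_M) z hk.
move/(congr1 (fun p : {poly rat} => p`_n)); rewrite coefZ -hF mulrC => <-.
rewrite /exp_trunc bigA_distr_bigA /= coef_sum coef_sum big_mkcond /=.
apply: eq_bigr => l _.
have -> : \prod_(i : 'I_M) (((((l i)`!%:R^-1 : rat) *: z i ^+ l i)%:P * 'X^(l i))
      : {poly {poly rat}})
   = (\prod_(i : 'I_M) ((((l i)`!%:R^-1 : rat) * c i ^+ l i)%:P * 'X^(i.+1 * l i)))%:P
        * 'X^(\sum_(i : 'I_M) (l i : nat)).
  rewrite prod_polyC_mulXn; congr (_%:P * _); apply: eq_bigr => i _.
  by rewrite /z exprZn scalerA exprM mul_polyC.
rewrite coefCM coefXn mulr_natr coefMn prod_polyC_mulXn coefCM coefXn.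
rewrite [\prod_(j < M) (_ * _)]big_split /= prodfV [n == _]eq_sym [k == _]eq_sym.
by case: (_ == n); case: (_ == k) => /=; rewrite ?mulr1n ?mulr0n ?mulr1 ?mulr0.
Qed.

(* B_(n,k)(x) = n!/k! [t^n] (sum_(i>=1) x_i t^i / i!)^k = n!/k! [t^n] (arcsin(t)/t - 1)^k;
   the truncation order D only has to exceed the degrees that contribute. *)
Lemma bell_asin_quot n k D : (k <= n)%N -> (n - k + 1 < D)%N ->
  bellB n k bell_x = n`!%:R / k`!%:R * ((asin_quot D - 1) ^+ k)`_n.
Proof.
move=> hkn hD.
have quot_sub1 : asin_quot D - 1 = 'X * \poly_(i < D.-1) asin_coef i.+1.
  apply/polyP => i; rewrite coefB coefXM coef1 /asin_quot !coef_poly.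
  case: i => [|i] /=; first by rewrite ifT ?asin_coef0 ?subrr //; lia.
  by rewrite subr0; case: D hD.
have trunc : agree_below (n - k + 1)
    (\poly_(i < n - k + 1) asin_coef i.+1) (\poly_(i < D.-1) asin_coef i.+1).
  by move=> i hi; rewrite !coef_poly hi ifT //; lia.
transitivity (n`!%:R *
  \sum_(l : {ffun 'I_(n - k + 1) -> 'I_n.+1} |
     (\sum_(j : 'I_(n - k + 1)) (j.+1 * l j) == n)%N
     && (\sum_(j : 'I_(n - k + 1)) (l j : nat) == k)%N)
    ((\prod_(j : 'I_(n - k + 1)) ((l j)`!)%:R)^-1
      * \prod_(j : 'I_(n - k + 1)) (asin_coef j.+1) ^+ l j)).
  rewrite /bellB mulr_sumr; apply: eq_bigr => l _.
  by rewrite natr_prod mulrA.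
have multi := @bell_multinomial (fun i => asin_coef i.+1) (n - k + 1) n.+1 n k.
rewrite /= in multi; rewrite multi; last by lia.
rewrite quot_sub1 !exprMn !coefXnM; case: ifP => _; first by rewrite !(mulr0, mul0r).
rewrite (agree_belowX k trunc); last by lia.
by rewrite mulrA; exact: mulrAC.
Qed.

(* Binomial expansion of (arcsin(t)/t - 1)^k, with [t^N] (arcsin(t)/t)^i
   = [t^(N+i)] arcsin(t)^i. *)
Lemma coef_asin_quot_sub1_pow D k N : ((asin_quot D - 1) ^+ k)`_N =
  \sum_(i < k.+1) (-1) ^+ (k - i) * (asin_poly D ^+ i)`_(N + i) *+ 'C(k, i).
Proof.
rewrite addrC exprDn coef_sum; apply: eq_bigr => i _.
rewrite coefMn /asin_poly exprMn coefXnM ifF ?addnK; last by lia.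
by rewrite -(rmorph_sign (@polyC rat)) coefCM.
Qed.

Lemma dfact_even m : dfact (2 * m) = (2 ^ m * m`!)%N.
Proof. by elim: m => [//|m IH]; rewrite mulnS /= IH factS expnS; lia. Qed.

Lemma rescale_summand (n k q : nat) (T : rat) : (q <= k)%N ->
  (2 * n)`!%:R / k`!%:R
    * ((-1) ^+ (k - q) * (q`!%:R / (2 * n + q)`!%:R * (-4) ^+ n * T) *+ 'C(k, q))
  = (-1) ^+ (n + k) * (dfact (4 * n))%:R / ((2 * n + k)`!)%:R *
    ((-1) ^+ q * ('C(2 * n + k, k - q))%:R * T).
Proof.
move=> hqk.
have sign_split : (-1) ^+ (n + k) = (-1) ^+ n * (-1) ^+ (k - q) * (-1) ^+ q :> rat.
  by rewrite -!exprD; congr (_ ^+ _); lia.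
have dfact4n : (dfact (4 * n))%:R = 4 ^+ n * (2 * n)`!%:R :> rat.
  have -> : (4 * n = 2 * (2 * n))%N by lia.
  by rewrite dfact_even natrM natrX exprM.
have sign4 : (-4) ^+ n = (-1) ^+ n * 4 ^+ n :> rat by rewrite -exprMn mulN1r.
have sign_sq : ((-1) ^+ q * (-1) ^+ q : rat) = 1.
  by rewrite -expr2 sqrr_sign.
have bink := bin_fact hqk.
have bin2nk := @bin_fact (2 * n + k) (k - q) ltac:(lia).
rewrite (_ : (2 * n + k - (k - q) = 2 * n + q)%N) in bin2nk; last by lia.
move/(congr1 (fun x => (x%:R : rat))): bink; rewrite !natrM => bink.
move/(congr1 (fun x => (x%:R : rat))): bin2nk; rewrite !natrM => bin2nk.
rewrite sign_split dfact4n sign4 -[_ *+ 'C(k, q)]mulr_natr -bink -bin2nk.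
set u := (-1) ^+ q. set s := (-1) ^+ (k - q). set w := (-1) ^+ n.
set c1 := 'C(k, q)%:R. set c2 := 'C(2 * n + k, k - q)%:R.
set f1 := q`!%:R. set f2 := (k - q)`!%:R. set f3 := (2 * n + q)`!%:R.
set f4 := (2 * n)`!%:R. set p4 := (4 : rat) ^+ n.
have nz1 : c1 != 0 by rewrite pnatr_eq0 -lt0n bin_gt0.
have nz2 : c2 != 0 by rewrite pnatr_eq0 -lt0n bin_gt0; lia.
have nz3 : f1 != 0 by rewrite pnatr_eq0 -lt0n fact_gt0.
have nz4 : f2 != 0 by rewrite pnatr_eq0 -lt0n fact_gt0.
have nz5 : f3 != 0 by rewrite pnatr_eq0 -lt0n fact_gt0.
transitivity (w * s * (u * u) * (p4 * f4) / (c2 * (f2 * f3)) * (c2 * T)); last by ring.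
rewrite sign_sq; clearbody c1 c2 f1 f2 f3 f4 u s w p4.
by field; rewrite nz1 nz2 nz3 nz4 nz5.
Qed.

Theorem theorem3p1 (k n : nat) (hk : (1 <= k)%N) (hn : (1 <= n)%N)
    (hkn : (k <= 2 * n)%N) :
  let x : nat -> rat := fun i =>
    (1 + (-1) ^+ i) / 2%:R * ((dfact i.-1) ^ 2)%:R / (i.+1)%:R in
  bellB (2 * n) k x =
    (-1) ^+ (n + k) * (dfact (4 * n))%:R / ((2 * n + k)`!)%:R
    * \sum_(1 <= q < k.+1)
        (-1) ^+ q * ('C(2 * n + k, k - q))%:R * Qfun q (2 * n) 2%:R.
Proof.
move=> x; set D := (2 * n + k).+1.
rewrite (_ : x = bell_x) // (@bell_asin_quot _ _ D) //; last by lia.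
rewrite coef_asin_quot_sub1_pow -(big_mkord xpredT
  (fun i => (-1) ^+ (k - i) * (asin_poly D ^+ i)`_(2 * n + i) *+ 'C(k, i))).
(* the i = 0 summand is [t^(2n)] 1 = 0 *)
rewrite big_ltn // expr0 addn0 coef1 (_ : (2 * n == 0)%N = false) /=; last first.
  by apply/negbTE; lia.
rewrite mulr0 mul0rn add0r !mulr_sumr; apply: eq_big_nat => q /andP [hq hqk].
rewrite coef_asin_pow //; last by lia.
rewrite Qfun_central // [(q + 2 * n)%N]addnC.
exact: rescale_summand.
Qed.
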